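(* Let $t$ be an illegal signed batch tag posted in L1 and not yet confirmed, and let $A$ be an honest agent that knows all transactions of $t$ and all transactions in already confirmed batches. Then $A$ can prevent the confirmation of $t$ (by winning the appropriate signature, validity, or integrity challenge, causing $t$ to be discarded).
   Context: Setting: L2 blockchain with an arranger of server processes, at most an unbounded number of which may be Byzantine; $f$ is the fault parameter of the arranger. A signed batch tag $t=(\mathit{batchId},h,\sigma)$ posted in L1 consists of a batch identifier, the Merkle root hash $h$ of a batch $b$ of transactions, and a combined signature $\sigma$; stakers stake on $t$, and $t$ is confirmed after a delay unless discarded by a challenge. $t$ is legal iff: (B1) $\sigma$ contains at least $f+1$ valid arranger process signatures; (B2) $b$ contains only valid transactions; (B3) no transaction in $b$ is duplicated; (B4) no transaction in $b$ appears in a previously confirmed batch; illegal otherwise. Challenges (L1 contracts): Signature challenge (B1): L1 contracts check the number of signers and verify the aggregate signature; if incorrect, $t$ is discarded and all stakers lose their stakes. Validity challenge (B2): challenger presents an invalid transaction $e$, its hash $h_e$, its position, and the hash of the middle node of the Merkle path from the leaf to the root; the contract checks invalidity of $e$ and that $e$ hashes to $h_e$; then a bisection game over the path: the staker selects a subpath to challenge, the challenger provides the middle node hash if the subpath has more than two nodes; when the subpath has two nodes with parent hash $h_p$ and child hash $h_c$, the challenger must post $h$ such that hashing the concatenation of $h$ and $h_c$ gives $h_p$; if so the challenger wins and the staker loses its stake. Integrity challenge 1 (B3): same, with the challenger supplying two Merkle paths in $t$ with leaf $e$. Integrity challenge 2 (B4): same, with one path in $t$ and one path in a previously confirmed tag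 $t'$ with leaf $e$. Hashes are assumed collision resistant. *)

From mathcomp Require Import all_boot.
From Stdlib Require List.
Set Implicit Arguments. Unset Strict Implicit. Unset Printing Implicit Defensive.

Section Model.
Variables (Tx Hash Proc PSig BId : eqType).
(* hash of a leaf (transaction) and hash of the concatenation of two hashes *)
Variables (hleaf : Tx -> Hash) (hnode : Hash -> Hash -> Hash).
(* verification of a partial signature of arranger process p on (batchId, h) *)
Variable verify : Proc -> BId -> Hash -> PSig -> bool.
Variable valid : pred Tx.
(* fault parameter of the arranger *)
Variable f : nat.

(* A batch, as the Merkle tree over its transactions *)
Inductive mtree := MLeaf of Tx | MNode of mtree & mtree.

Fixpoint leaves (b : mtree) : seq Tx :=
  match b with MLeaf x => [:: x] | MNode l r => leaves l ++ leaves r end.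

Fixpoint mroot (b : mtree) : Hash :=
  match b with MLeaf x => hleaf x | MNode l r => hnode (mroot l) (mroot r) end.

(* signed batch btag (batchId, h, sigma); sigma is the combined signature,
   given as the list of (process, partial signature) pairs it aggregates *)
Record btag := BTag { batchId : BId; thash : Hash; tsig : seq (Proc * PSig) }.

Definition valid_signers (t : btag) : nat :=
  size (undup [seq x.1 | x <- tsig t & verify x.1 (batchId t) (thash t) x.2]).

Definition B1 (t : btag) : Prop := f.+1 <= valid_signers t.
Definition B2 (b : mtree) : Prop := all valid (leaves b).
Definition B3 (b : mtree) : Prop := uniq (leaves b).
Definition B4 (b : mtree) (confirmed : list (btag * mtree)) : Prop :=
  forall c, List.In c confirmed -> forall x, x \in leaves b -> x \notin leaves c.2.

Definition legal (t : btag) (b : mtree) (confirmed : list (btag * mtree)) : Prop :=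
  [/\ B1 t, B2 b, B3 b & B4 b confirmed].

(* A position in a Merkle tree is given leaf-to-root as a list of bits:
   dirs`_k = true iff the k-th node of the path (node 0 = leaf) is a right
   child.  The parent of child hc with sibling s is the hash of the
   concatenation of s and hc in tree order. *)
Definition parent (isright : bool) (s hc : Hash) : Hash :=
  if isright then hnode s hc else hnode hc s.

(* Bisection game on the segment of the path from node i to node i+len,
   whose end hashes ni (lower) and nj (upper) are already posted.
   The proposition says that the challenger has a winning strategy:
   - one node (len = 0): the posted hashes must coincide;
   - two nodes (parent nj, child ni): the challenger must post some h such
     that hashing the concatenation of h and ni gives nj;
   - otherwise the challenger posts the middle node hash nm and the staker
     chooses which of the two subpaths to challenge. *)
Fixpoint bisect (fuel : nat) (dirs : seq bool) (i len : nat) (ni nj : Hash) : Prop :=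
  match fuel with
  | 0 => False
  | fuel'.+1 =>
    match len with
    | 0 => ni = nj
    | 1 => exists h, parent (nth false dirs i) h ni = nj
    | _ => exists nm, bisect fuel' dirs i len./2 ni nm /\
                      bisect fuel' dirs (i + len./2) (len - len./2) nm nj
    end
  end.

Definition path_game (dirs : seq bool) (he hr : Hash) : Prop :=
  bisect (size dirs).+1 dirs 0 (size dirs) he hr.

Inductive challenge :=
| SigChallenge
| ValidityChallenge of Tx & seq bool
| Integrity1 of Tx & seq bool & seq bool
| Integrity2 of Tx & seq bool & btag & seq bool.

(* The challenger can win challenge c against btag t (the L1 contracts only
   see t, the previously confirmed tags and the data posted in the game). *)
Definition challenger_wins (t : btag) (confirmed : list (btag * mtree))
    (c : challenge) : Prop :=
  match c with
  | SigChallenge => ~ B1 t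
  | ValidityChallenge e dirs =>
      ~~ valid e /\ path_game dirs (hleaf e) (thash t)
  | Integrity1 e d1 d2 =>
      d1 <> d2 /\ path_game d1 (hleaf e) (thash t) /\ path_game d2 (hleaf e) (thash t)
  | Integrity2 e d1 t' d2 =>
      List.In t' (map fst confirmed) /\
      path_game d1 (hleaf e) (thash t) /\ path_game d2 (hleaf e) (thash t')
  end.

Definition can_prevent_confirmation (t : btag) (confirmed : list (btag * mtree)) : Prop :=
  exists c, challenger_wins t confirmed c.

End Model.

(* Collision resistance of the hash, modelled as absence of collisions *)
Definition collision_free (Tx Hash : eqType) (hleaf : Tx -> Hash)
  (hnode : Hash -> Hash -> Hash) : Prop :=
  [/\ injective hleaf,
      (forall a b c d, hnode a b = hnode c d -> a = c /\ b = d)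
    & (forall x a b, hleaf x <> hnode a b)].

(* An illegal tag violates one of B1-B4, and each violation is witnessed by
   data the agent knows: a failing signature, or leaves of the batch (and of
   a confirmed batch) together with their positions.  The agent then wins
   the bisection game over the Merkle path of such a leaf by always posting
   the true hashes of the path: every two-node segment it is challenged on
   is a genuine child/parent pair, whose sibling hash it can post.  Two
   occurrences of a duplicated transaction have distinct positions because
   positions of leaves in a tree are pairwise distinct. *)
From Stdlib Require Import Classical.
From mathcomp Require Import all_boot zify.
From Stdlib Require List.

Set Implicit Arguments.
Unset Strict Implicit.
Unset Printing Implicit Defensive.

Section MerklePaths.
Variables (Tx Hash : eqType) (hleaf : Tx -> Hash) (hnode : Hash -> Hash -> Hash).

Local Notation mroot := (mroot hleaf hnode).
Local Notation parent := (parent hnode).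
Local Notation bisect := (bisect hnode).
Local Notation path_game := (path_game hnode).

(* Positions are leaf-to-root, as in [path_game]: the bit of the root is last. *)
Fixpoint leaf_paths (b : mtree Tx) : seq (Tx * seq bool) :=
  match b with
  | MLeaf x => [:: (x, [::])]
  | MNode l r => [seq (p.1, rcons p.2 false) | p <- leaf_paths l] ++
                 [seq (p.1, rcons p.2 true) | p <- leaf_paths r]
  end.

Lemma map_fst_leaf_paths b : map fst (leaf_paths b) = leaves b.
Proof.
by elim: b => [x|l IHl r IHr] //=; rewrite map_cat -!map_comp -IHl -IHr.
Qed.

Lemma mem_leaf_paths b x : x \in leaves b -> exists d, (x, d) \in leaf_paths b.
Proof.
by rewrite -map_fst_leaf_paths => /mapP [[y d] Hin /= ->]; exists d.
Qed.

Lemma uniq_map_snd_leaf_paths b : uniq (map snd (leaf_paths b)).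
Proof.
elim: b => [x|l IHl r IHr] //=.
rewrite map_cat -!map_comp cat_uniq !(map_comp (rcons^~ _) snd).
rewrite !(map_inj_uniq (rcons_injl _)) IHl IHr andbT.
apply/hasPn => _ /mapP [p _ ->]; apply/negP => /mapP [q _ /(congr1 (last true))].
by rewrite !last_rcons.
Qed.

Lemma leaf_paths_dup b : ~~ uniq (leaves b) ->
  exists x d1 d2, [/\ d1 != d2, (x, d1) \in leaf_paths b & (x, d2) \in leaf_paths b].
Proof.
rewrite -map_fst_leaf_paths.
case Eps: (leaf_paths b) => [//|p0 ps]; rewrite -Eps.
case/(uniqPn p0.1) => i [j [lt_ij]]; rewrite size_map => lt_j.
have lt_i := ltn_trans lt_ij lt_j.
rewrite !(nth_map p0) // => eq_fst.
exists (nth p0 (leaf_paths b) i).1, (nth p0 (leaf_paths b) i).2,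
       (nth p0 (leaf_paths b) j).2.
split; last by rewrite eq_fst -surjective_pairing mem_nth.
- rewrite -!(nth_map p0 [::] snd) // nth_uniq ?size_map ?uniq_map_snd_leaf_paths //.
  by rewrite neq_ltn lt_ij.
- by rewrite -surjective_pairing mem_nth.
Qed.

Definition hash_chain (dirs : seq bool) (node : nat -> Hash) (i len : nat) :=
  forall k, i <= k < i + len ->
    exists s, parent (nth false dirs k) s (node k) = node k.+1.

Definition merkle_path (dirs : seq bool) (he hr : Hash) :=
  exists node, [/\ node 0 = he, node (size dirs) = hr & hash_chain dirs node 0 (size dirs)].

Lemma merkle_path_rcons dirs c s he h : merkle_path dirs he h ->
  merkle_path (rcons dirs c) he (parent c s h).
Proof.
case=> node [node0 nodeS chain].
exists (fun k => if k <= size dirs then node k else parent c s h).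
rewrite size_rcons ltnn; split=> // k /andP [_]; rewrite add0n ltnS nth_rcons.
case: ltngtP => // [lt_k | ->] _; last by rewrite nodeS; exists s.
by apply: chain; rewrite lt_k.
Qed.

Lemma leaf_paths_merkle_path b x d : (x, d) \in leaf_paths b ->
  merkle_path d (hleaf x) (mroot b).
Proof.
elim: b x d => [y|l IHl r IHr] x d /=.
  by rewrite inE => /eqP [-> ->]; exists (fun=> hleaf y).
rewrite mem_cat => /orP [] /mapP [[x' d'] Hin [-> ->]] /=.
- exact: (merkle_path_rcons false (mroot r) (IHl _ _ Hin)).
- exact: (merkle_path_rcons true (mroot l) (IHr _ _ Hin)).
Qed.

Lemma bisect_hash_chain dirs node fuel i len : len < fuel ->
  hash_chain dirs node i len -> bisect fuel dirs i len (node i) (node (i + len)).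
Proof.
elim: fuel i len => [//|fuel IH] i [|[|len]] lt_len chain /=.
- by rewrite addn0.
- by rewrite addn1; apply: chain; rewrite addn1 leqnn ltnSn.
- have : 0 < (len.+2)./2 < len.+2 by rewrite -divn2; lia.
  set h := (len.+2)./2 => /andP [h_gt0 h_lt].
  exists (node (i + h)); split.
  + by apply: IH => [|k /andP [? ?]]; [lia | apply: chain; lia].
  + have -> : i + len.+2 = i + h + (len.+2 - h) by lia.
    by apply: IH => [|k /andP [? ?]]; [lia | apply: chain; lia].
Qed.

Lemma merkle_path_game dirs he hr : merkle_path dirs he hr -> path_game dirs he hr.
Proof.
case=> node [<- <- chain]; rewrite /path_game -[size dirs]add0n.
exact: bisect_hash_chain.
Qed.

Lemma leaf_paths_game b x d : (x, d) \in leaf_paths b ->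
  path_game d (hleaf x) (mroot b).
Proof. by move/leaf_paths_merkle_path/merkle_path_game. Qed.

End MerklePaths.

Section Challenges.
Variables (Tx Hash Proc PSig BId : eqType).
Variables (hleaf : Tx -> Hash) (hnode : Hash -> Hash -> Hash).
Variables (verify : Proc -> BId -> Hash -> PSig -> bool) (valid : pred Tx) (f : nat).
Variables (t : btag Hash Proc PSig BId) (b : mtree Tx).
Variable confirmed : list (btag Hash Proc PSig BId * mtree Tx).
Hypothesis thash_t : thash t = mroot hleaf hnode b.

Local Notation wins := (challenger_wins hleaf hnode verify valid f t confirmed).

Lemma not_legal_cases : ~ legal verify valid f t b confirmed ->
  [\/ ~ B1 verify f t, ~ B2 valid b, ~ B3 b | ~ B4 b confirmed].
Proof.
move=> illegal; apply: NNPP => no_case; apply: illegal.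
split; apply: NNPP => violated; apply: no_case.
- exact: Or41.
- exact: Or42.
- exact: Or43.
- exact: Or44.
Qed.

Lemma validity_challenge_wins : ~ B2 valid b -> exists c, wins c.
Proof.
move/negP/allPn => [x /mem_leaf_paths [d Hd] invalid_x].
exists (ValidityChallenge _ _ _ _ x d); split=> //.
by rewrite thash_t; apply: leaf_paths_game Hd.
Qed.

Lemma integrity1_wins : ~ B3 b -> exists c, wins c.
Proof.
move/negP/leaf_paths_dup => [x [d1 [d2 [/eqP neq_d Hd1 Hd2]]]].
exists (Integrity1 _ _ _ _ x d1 d2).
by rewrite /= thash_t; split=> //; split; apply: leaf_paths_game.
Qed.

Lemma integrity2_wins :
  (forall c, List.In c confirmed -> thash c.1 = mroot hleaf hnode c.2) ->
  ~ B4 b confirmed -> exists c, wins c.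
Proof.
move=> thash_confirmed /not_all_ex_not [c /(imply_to_and (List.In c confirmed))].
case=> Hc /not_all_ex_not [x /(imply_to_and (x \in leaves b))].
case=> /mem_leaf_paths [d1 Hd1] /negP/negPn/mem_leaf_paths [d2 Hd2].
exists (Integrity2 x d1 c.1 d2); split; first exact: List.in_map.
by rewrite thash_t thash_confirmed //; split; apply: leaf_paths_game.
Qed.

End Challenges.

Theorem mainTheorem2 (Tx Hash Proc PSig BId : eqType)
  (hleaf : Tx -> Hash) (hnode : Hash -> Hash -> Hash)
  (verify : Proc -> BId -> Hash -> PSig -> bool) (valid : pred Tx) (f : nat)
  (t : btag Hash Proc PSig BId) (b : mtree Tx)
  (confirmed : list (btag Hash Proc PSig BId * mtree Tx)) :
  collision_free hleaf hnode ->
  (* h in t is the Merkle root of the batch b of t *)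
  thash t = mroot hleaf hnode b ->
  (* confirmed tags carry the Merkle roots of their batches *)
  (forall c, List.In c confirmed -> thash c.1 = mroot hleaf hnode c.2) ->
  (* t is not yet confirmed *)
  ~ List.In t (map fst confirmed) ->
  (* t is illegal *)
  ~ legal verify valid f t b confirmed ->
  can_prevent_confirmation hleaf hnode verify valid f t confirmed.
Proof.
move=> _ thash_t thash_confirmed _ /not_legal_cases [].
- by move=> notB1; exists (SigChallenge _ _ _ _ _).
- exact: validity_challenge_wins.
- exact: integrity1_wins.
- exact: integrity2_wins.
Qed.
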